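(* Let $\mathcal E$ be an exchangeability system for a noncommutative probability space $(\mathcal A,\phi)$, let $X_1,\dots,X_n\in\mathcal A$ and $I\subseteq[n]$ with $X_j=1$ (the unit) for all $j\in I$. Let $\pi\in\Pi_n$ be such that $\{j\}$ is a block of $\pi$ for every $j\in I$, and let $\tilde\pi$ be the partition of $[n]\setminus I$ obtained by removing these singletons from $\pi$. Then $K_\pi(X_1,\dots,X_n)=K_{\tilde\pi}(X_i:i\in[n]\setminus I)$, where on the right the variables are taken in increasing order of $i$ and $\tilde\pi$ is transported accordingly to a partition of $[n-|I|]$.
   Context: A noncommutative probability space is a pair $(\mathcal A,\phi)$ of a complex unital algebra $\mathcal A$ and a unital linear functional $\phi$. An exchangeability system $\mathcal E$ for $(\mathcal A,\phi)$ consists of a noncommutative probability space $(\mathcal U,\tilde\phi)$ and a family $(\iota_k)_{k\in\mathbb N}$ of embeddings (injective unital algebra homomorphisms) $\iota_k:\mathcal A\to\mathcal A_k\subseteq\mathcal U$ with $\tilde\phi\circ\iota_k=\phi$; write $X^{(k)}=\iota_k(X)$. It is required that for all $X_1,\dots,X_n\in\mathcal A$, indices $i_1,\dots,i_n\in\mathbb N$ and bijections $\sigma$ of $\mathbb N$, $\tilde\phi(X_1^{(i_1)}\cdots X_n^{(i_n)})=\tilde\phi(X_1^{(\sigma(i_1))}\cdots X_n^{(\sigma(i_n))})$; this value depends only on the kernel of $j\mapsto i_j$ and for a partition $\sigma$ is denoted $\phi_\sigma(X_1,\dots,X_n)$. $\Pi_n$ is the lattice of set partitions of $[n]$ under refinement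 with Möbius function $\mu$; $K_\pi(X_1,\dots,X_n)=\sum_{\sigma\le\pi}\phi_\sigma(X_1,\dots,X_n)\mu(\sigma,\pi)$. *)

From HB Require Import structures.
From mathcomp Require Import all_boot all_order all_algebra.
From mathcomp Require Import reals complex.
Set Implicit Arguments. Unset Strict Implicit. Unset Printing Implicit Defensive.
Import Order.TTheory GRing.Theory Num.Theory.
Local Open Scope ring_scope.

Section Defs.
Variable R : realType.
Local Notation C := (R[i])%C.

Definition nc_functional (A : algType C) (phi : A -> C) : Prop :=
  (forall (a : C) (x y : A), phi (a *: x + y) = a * phi x + phi y) /\ phi 1 = 1.

Definition unital_alg_hom (A B : algType C) (f : A -> B) : Prop :=
  [/\ forall (a : C) (x y : A), f (a *: x + y) = a *: f x + f y,
      forall x y : A, f (x * y) = f x * f y & f 1 = 1].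

Record exch_system (A : algType C) (phi : A -> C) := ExchSystem {
  ex_U : algType C;
  ex_phi : ex_U -> C;
  ex_iota : nat -> A -> ex_U;
  ex_phi_func : nc_functional ex_phi;
  ex_iota_hom : forall k, unital_alg_hom (ex_iota k);
  ex_iota_inj : forall k, injective (ex_iota k);
  ex_iota_phi : forall k (x : A), ex_phi (ex_iota k x) = phi x;
  ex_exch : forall (n : nat) (X : 'I_n -> A) (i : 'I_n -> nat) (s : nat -> nat),
      bijective s ->
      ex_phi (\prod_(j < n) ex_iota (i j) (X j)) =
      ex_phi (\prod_(j < n) ex_iota (s (i j)) (X j))
}.

Definition Pi (n : nat) := {P : {set {set 'I_n}} | partition P [set: 'I_n]}.

Definition refines n (s p : {set {set 'I_n}}) : bool :=
  [forall B in s, exists B' in p, B \subset B'].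

(* Moebius function of the lattice Pi_n: inverse of the zeta function in the
   incidence algebra, realised as the inverse of the zeta matrix. *)
Definition zeta_mx n : 'M[C]_#|{: Pi n}| :=
  \matrix_(i, j) (refines (val (enum_val i)) (val (enum_val j)))%:R.

Definition moebius n (s p : Pi n) : C :=
  invmx (zeta_mx n) (enum_rank s) (enum_rank p).

(* Moebius function on raw sets of blocks (0 if not both partitions). *)
Definition mu n (s p : {set {set 'I_n}}) : C :=
  match insub s, insub p with
  | Some s', Some p' => moebius (n := n) s' p'
  | _, _ => 0
  end.

Variables (A : algType C) (phi : A -> C) (E : exch_system phi).

(* phi_sigma(X_1,...,X_n): phi~(X_1^(i_1) ... X_n^(i_n)) where the kernel of
   j |-> i_j is sigma; we take i_j := the position of the block of j. *)
Definition phi_part n (s : {set {set 'I_n}}) (X : 'I_n -> A) : C :=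
  @ex_phi _ _ E (\prod_(j < n) @ex_iota _ _ E (index (pblock s j) (enum s)) (X j)).

Definition K n (p : {set {set 'I_n}}) (X : 'I_n -> A) : C :=
  \sum_(s : Pi n | refines (val s) p) phi_part (val s) X * mu (val s) p.

End Defs.

(* increasing enumeration of the complement of I in [n] *)
Definition compl_enum n (I : {set 'I_n}) : 'I_#|~: I| -> 'I_n :=
  fun k => enum_val k.

Definition remove_part n (I : {set 'I_n}) (p : {set {set 'I_n}})
  : {set {set 'I_#|~: I|}} :=
  [set (@compl_enum n I) @^-1: B | B : {set 'I_n} in p & ~~ (B \subset I)].

From HB Require Import structures.
From mathcomp Require Import all_boot all_order all_algebra fingroup perm.
From mathcomp Require Import reals complex.
Set Implicit Arguments. Unset Strict Implicit. Unset Printing Implicit Defensive.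
Import GRing.Theory.

(** Adding the singletons {j}, j in I, is an order isomorphism from the
    partitions of [n] \ I onto the partitions of [n] that have these
    singletons as blocks, and every refinement of pi is of the latter kind.
    Since X_j = 1 for j in I, the factors X_j^(i_j) with j in I disappear from
    the product defining phi_sigma, so by exchangeability phi_sigma(X) is the
    moment of the reduced tuple for the reduced partition.  Moebius inversion
    of phi_sigma = sum_(tau <= sigma) K_tau then transports the cumulants. *)

Section Partitions.
Variable T : finType.
Implicit Types (P : {set {set T}}) (B : {set T}).

Lemma partition_setTP P :
  partition P [set: T] <->
  [/\ set0 \notin P, (forall x, exists2 B, B \in P & x \in B) &
      (forall B1 B2 x, B1 \in P -> B2 \in P -> x \in B1 -> x \in B2 -> B1 = B2)].
Proof.
split.
  case/and3P => /eqP coverP trivP P0; split => // [x|B1 B2 x B1P B2P xB1 xB2].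
    have /bigcupP[B BP xB] : x \in cover P by rewrite coverP inE.
    by exists B.
  by rewrite -(def_pblock trivP B1P xB1) (def_pblock trivP B2P xB2).
case=> P0 coverP uniqP; apply/and3P; split => //.
  apply/eqP/setP => x; rewrite inE; apply/bigcupP.
  by have [B BP xB] := coverP x; exists B.
apply/trivIsetP => B1 B2 B1P B2P neqB; rewrite disjoint_subset; apply/subsetP => x xB1.
by rewrite inE; apply: contra_neqN neqB => xB2; apply: uniqP xB1 xB2.
Qed.

Lemma block_inhabited P B : set0 \notin P -> B \in P -> exists x, x \in B.
Proof. by move=> P0 BP; apply/set0Pn; apply: contraNneq P0 => <-. Qed.

Lemma index_pblock_eq P x y : partition P [set: T] ->
  (index (pblock P x) (enum P) == index (pblock P y) (enum P)) = (y \in pblock P x).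
Proof.
case/and3P => /eqP coverP trivP _.
have xP : x \in cover P by rewrite coverP inE.
rewrite -(eq_pblock _ trivP xP) (inj_in_eq (index_inj set0 (s := enum P))) ?mem_enum ?pblock_mem //.
by rewrite coverP inE.
Qed.

End Partitions.

Lemma strict_order_ind (T : finType) (lt : rel T) :
  transitive lt -> irreflexive lt ->
  forall P : T -> Prop, (forall x, (forall y, lt y x -> P y) -> P x) -> forall x, P x.
Proof.
move=> lt_trans lt_irr P IH x; have [m] := ubnP #|[set y | lt y x]|.
elim: m x => // m IHm x below_x; apply: IH => y lt_yx; apply: IHm.
rewrite ltnS in below_x; apply: leq_trans below_x; apply: proper_card; apply/properP; split.
  by apply/subsetP => z; rewrite !inE => /lt_trans; apply.
by exists y; rewrite !inE ?lt_irr.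
Qed.

Lemma big_enum_val_monoid (R : Type) (idx : R) (op : Monoid.law idx)
    (T : finType) (A : {pred T}) (F : T -> R) :
  \big[op/idx]_(x in A) F x = \big[op/idx]_(k < #|A|) F (enum_val k).
Proof.
have [A0|/card_gt0P[x0 _]] := posnP #|A|.
  rewrite big_pred0 => [|x]; last by rewrite card0_eq.
  by rewrite big1 // => k; move: (ltn_ord k); rewrite {2}A0.
rewrite -big_filter deprecated_filter_index_enum (big_nth x0) -cardE big_mkord.
by apply: eq_bigr => k _; rewrite /enum_val (set_nth_default x0) // -cardE.
Qed.

Lemma inj_in_perm (T : finType) (D : {set T}) (f : T -> T) :
  {in D &, injective f} -> exists g : {perm T}, {in D, g =1 f}.
Proof.
move=> f_inj; pose C := enum (~: D); pose C' := enum (~: (f @: D)).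
have sizeC : size C = size C'.
  rewrite -!cardE; apply/eqP; rewrite -(eqn_add2l #|D|) cardsC.
  by rewrite -{1}(card_in_imset f_inj) cardsC.
pose h x := nth x C' (index x C).
have index_lt x : x \notin D -> index x C < size C'.
  by move=> xD; rewrite -sizeC index_mem mem_enum inE.
have h_notin x : x \notin D -> h x \notin f @: D.
  by move=> xD; have := mem_nth x (index_lt x xD); rewrite mem_enum inE.
pose g x := if x \in D then f x else h x.
have g_inj : injective g.
  rewrite /g => x y; case: (boolP (x \in D)) => xD; case: (boolP (y \in D)) => yD.
  - exact: f_inj.
  - by move=> fx_hy; have := h_notin y yD; rewrite -fx_hy imset_f.
  - by move=> hx_fy; have := h_notin x xD; rewrite hx_fy imset_f.
  rewrite /h (set_nth_default x y (index_lt y yD)) => /eqP.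
  rewrite nth_uniq ?index_lt ?enum_uniq // => /eqP.
  by apply: (index_inj x); rewrite /C mem_enum inE.
by exists (perm g_inj) => x xD; rewrite permE /g xD.
Qed.

Lemma perm_ord_nat_bij N (g : {perm 'I_N.+1}) :
  bijective (fun m => if m < N.+1 then val (g (inord m)) else m).
Proof.
exists (fun m => if m < N.+1 then val (g^-1%g (inord m)) else m) => m /=.
all: have [mN|mN] := boolP (m < N.+1); last by rewrite !(negbTE mN).
all: by rewrite ?mN ltn_ord inord_val ?permK ?permKV inordK.
Qed.

Lemma same_kernel_bij m (a b : 'I_m -> nat) :
  (forall k k', (a k == a k') = (b k == b k')) ->
  exists s : nat -> nat, bijective s /\ forall k, s (a k) = b k.
Proof.
move=> ab; pose N := (\max_(k < m) maxn (a k) (b k)).+1.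
have ltN k : a k < N /\ b k < N.
  by apply/andP; rewrite -gtn_max ltnS (leq_bigmax (F := fun k => maxn (a k) (b k))).
pose D := [set x : 'I_N | [exists k, a k == x]].
pose f (x : 'I_N) : 'I_N := if [pick k | a k == x] is Some k then inord (b k) else x.
have f_label k : f (inord (a k)) = inord (b k).
  rewrite /f; case: pickP => [k' /eqP|/(_ k)]; rewrite inordK ?(proj1 (ltN k)) ?eqxx //.
  by move/eqP; rewrite ab => /eqP ->.
have f_inj : {in D &, injective f}.
  move=> x y; rewrite !inE => /existsP[k /eqP ax] /existsP[k' /eqP ay].
  have -> : x = inord (a k) by rewrite ax inord_val.
  have -> : y = inord (a k') by rewrite ay inord_val.
  rewrite !f_label => /(congr1 (@nat_of_ord _)); rewrite !inordK ?(proj2 (ltN _)) // => /eqP.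
  by rewrite -ab => /eqP ->.
have [g gf] := inj_in_perm f_inj.
exists (fun m => if m < N then val (g (inord m)) else m).
split=> [|k]; first exact: perm_ord_nat_bij.
have aD : inord (a k) \in D.
  by rewrite inE; apply/existsP; exists k; rewrite inordK ?(proj1 (ltN k)).
by rewrite (proj1 (ltN k)) gf // f_label /= inordK ?(proj2 (ltN k)).
Qed.

Section Refinement.
Variable n : nat.
Implicit Types s p : {set {set 'I_n}}.

Lemma refines_refl s : refines s s.
Proof. by apply/forall_inP => B sB; apply/exists_inP; exists B. Qed.

Lemma refines_trans : transitive (@refines n).
Proof.
move=> q s p /forall_inP sq /forall_inP qp; apply/forall_inP => B sB.
have /exists_inP[B' qB' BB'] := sq B sB; have /exists_inP[B'' pB'' B'B''] := qp B' qB'.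
by apply/exists_inP; exists B''; rewrite // (subset_trans BB' B'B'').
Qed.

Lemma refines_anti (s p : Pi n) :
  refines (val s) (val p) -> refines (val p) (val s) -> s = p.
Proof.
suff sub (s1 s2 : Pi n) : refines (val s1) (val s2) -> refines (val s2) (val s1) ->
    {subset val s1 <= val s2}.
  by move=> sp ps; apply: val_inj; apply/setP => B; apply/idP/idP; apply: sub.
move=> /forall_inP s12 /forall_inP s21 B s1B.
have /partition_setTP[s1_0 _ s1_uniq] := valP s1.
have /exists_inP[B' s2B' BB'] := s12 B s1B; have /exists_inP[B'' s1B'' B'B''] := s21 B' s2B'.
have [x xB] := block_inhabited s1_0 s1B.
have BB'' : B = B'' by apply: s1_uniq xB (subsetP B'B'' x (subsetP BB' x xB)).
suff -> : B = B' by [].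
by apply/eqP; rewrite eqEsubset BB' BB'' B'B''.
Qed.

Definition strictly_refines (s p : Pi n) := refines (val s) (val p) && (s != p).

Lemma strictly_refines_trans : transitive strictly_refines.
Proof.
move=> q s p /andP[sq neq_sq] /andP[qp _]; rewrite /strictly_refines (refines_trans sq qp).
by apply: contra_neq neq_sq => eq_sp; apply: refines_anti; rewrite // eq_sp.
Qed.

Lemma strictly_refines_irr : irreflexive strictly_refines.
Proof. by move=> s; rewrite /strictly_refines eqxx andbF. Qed.

End Refinement.

Local Open Scope ring_scope.

Section Moebius.
Variables (R : realType) (n : nat).
Local Notation C := (R[i])%C.
Local Notation Z := (@zeta_mx R n).
Local Notation N := #|{: Pi n}|.
Implicit Types s p t : Pi n.

Definition pi_row (F : Pi n -> C) : 'rV[C]_N := \row_i F (enum_val i).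

Lemma pi_rowE F p : pi_row F 0 (enum_rank p) = F p.
Proof. by rewrite mxE enum_rankK. Qed.

Lemma zeta_mxE s p : Z (enum_rank s) (enum_rank p) = (refines (val s) (val p))%:R.
Proof. by rewrite mxE !enum_rankK. Qed.

Lemma mu_val s p : mu R (val s) (val p) = invmx Z (enum_rank s) (enum_rank p).
Proof. by rewrite /mu !valK. Qed.

Lemma sum_ord_Pi (F : 'I_N -> C) : \sum_i F i = \sum_(t : Pi n) F (enum_rank t).
Proof. by rewrite (reindex enum_rank) //; apply: onW_bij; apply: enum_rank_bij. Qed.

Lemma zeta_mx_unit : Z \in unitmx.
Proof.
rewrite -row_free_unit -kermx_eq0; apply/eqP/matrixP => i j; rewrite [RHS]mxE.
pose v := row i (kermx Z).
suff v0 (t : Pi n) : v 0 (enum_rank t) = 0 by have := v0 (enum_val j); rewrite enum_valK mxE.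
have vZ : v *m Z = 0 by rewrite -row_mul mulmx_ker row0.
clearbody v.
elim/(strict_order_ind (@strictly_refines_trans n) (@strictly_refines_irr n)): t => p IH.
have := congr1 (fun M : 'rV_N => M 0 (enum_rank p)) vZ; rewrite /= !mxE sum_ord_Pi.
rewrite (bigD1 p) //= zeta_mxE refines_refl mulr1 big1 ?addr0 // => t neq_tp.
rewrite zeta_mxE; case tp: (refines _ _); last by rewrite mulr0.
by rewrite IH ?mul0r // /strictly_refines tp neq_tp.
Qed.

(* Descending induction on s, reading off entry (s, p) of zeta * mu = 1. *)
Lemma mu_eq0 s p : ~~ refines (val s) (val p) -> mu R (val s) (val p) = 0.
Proof.
pose coarsens (t s : Pi n) := strictly_refines s t.
have coarsens_trans : transitive coarsens.
  by move=> q t1 t2 t1q qt2; apply: strictly_refines_trans qt2 t1q.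
have coarsens_irr : irreflexive coarsens by apply: strictly_refines_irr.
move: s; apply: (strict_order_ind coarsens_trans coarsens_irr) => s IH not_sp.
have := congr1 (fun M : 'M_N => M (enum_rank s) (enum_rank p)) (mulmxV zeta_mx_unit).
rewrite /= !mxE sum_ord_Pi (inj_eq enum_rank_inj).
have neq_sp : s != p by apply: contraNneq not_sp => ->; apply: refines_refl.
rewrite (negbTE neq_sp) (bigD1 s) //= zeta_mxE refines_refl mul1r -mu_val big1 ?addr0 //.
move=> t neq_ts; rewrite zeta_mxE; case st: (refines _ _); last by rewrite mul0r.
rewrite -mu_val IH ?mulr0 //; first by rewrite /coarsens /strictly_refines st eq_sym.
by apply: contraNN not_sp; apply: refines_trans.
Qed.

Lemma pi_row_mul_zeta F p :
  (pi_row F *m Z) 0 (enum_rank p) = \sum_(s : Pi n | refines (val s) (val p)) F s.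
Proof.
rewrite mxE sum_ord_Pi [RHS]big_mkcond; apply: eq_bigr => s _.
by rewrite pi_rowE zeta_mxE mulr_natr mulrb.
Qed.

Lemma pi_row_mul_mu F p :
  (pi_row F *m invmx Z) 0 (enum_rank p) =
  \sum_(s : Pi n | refines (val s) (val p)) F s * mu R (val s) (val p).
Proof.
rewrite mxE sum_ord_Pi [RHS]big_mkcond; apply: eq_bigr => s _.
by rewrite pi_rowE -mu_val; case: ifPn => // /mu_eq0 ->; rewrite mulr0.
Qed.

Lemma moebius_inversion (g : Pi n -> C) p :
  \sum_(s : Pi n | refines (val s) (val p))
    (\sum_(t : Pi n | refines (val t) (val s)) g t) * mu R (val s) (val p) = g p.
Proof.
rewrite -pi_row_mul_mu.
have -> : pi_row (fun s => \sum_(t : Pi n | refines (val t) (val s)) g t) = pi_row g *m Z.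
  by apply/rowP => i; rewrite -(enum_valK i) pi_rowE pi_row_mul_zeta.
by rewrite mulmxK ?zeta_mx_unit ?pi_rowE.
Qed.

Variables (A : algType C) (phi : A -> C) (E : exch_system phi).

Lemma phi_part_sum_K X p :
  phi_part E (val p) X = \sum_(s : Pi n | refines (val s) (val p)) K E (val s) X.
Proof.
rewrite -(pi_row_mul_zeta (fun s => K E (val s) X)).
have -> : pi_row (fun s => K E (val s) X) = pi_row (fun s => phi_part E (val s) X) *m invmx Z.
  by apply/rowP => i; rewrite -(enum_valK i) pi_rowE pi_row_mul_mu.
by rewrite mulmxKV ?zeta_mx_unit ?pi_rowE.
Qed.

End Moebius.

Section Singletons.
Variables (n : nat) (I : {set 'I_n}).
Local Notation n' := #|~: I|.
Local Notation ce := (@compl_enum n I).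
Implicit Types (s p : {set {set 'I_n}}) (t : {set {set 'I_n'}}).

Definition insert_part t : {set {set 'I_n}} :=
  [set ce @: B | B : {set 'I_n'} in t] :|: [set [set j] | j in I].

Definition has_singletons p := forall j, j \in I -> [set j] \in p.

Lemma compl_enum_inj : injective ce.
Proof. exact: enum_val_inj. Qed.

Lemma compl_enum_notin k : ce k \notin I.
Proof. by have := enum_valP k; rewrite inE. Qed.

Lemma compl_enum_onto x : x \notin I -> exists k, ce k = x.
Proof.
move=> xI; have xCI : x \in ~: I by rewrite inE.
by exists (enum_rank_in xCI x); rewrite /compl_enum enum_rankK_in.
Qed.

Lemma preim_compl_enum_imset (B : {set 'I_n'}) : ce @^-1: (ce @: B) = B.
Proof. by apply/setP => k; rewrite inE (mem_imset _ _ compl_enum_inj). Qed.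

Lemma imset_compl_enum_preim (B : {set 'I_n}) : [disjoint B & I] ->
  ce @: (ce @^-1: B) = B.
Proof.
move=> BI; apply/setP => x; apply/imsetP/idP => [[k] |xB]; first by rewrite inE => ? ->.
have [k kx] := compl_enum_onto (negbT (disjointFr BI xB)).
by exists k; rewrite ?inE kx.
Qed.

Lemma mem_remove_part p C :
  reflect (exists2 B, B \in p & ~~ (B \subset I) /\ C = ce @^-1: B)
          (C \in remove_part I p).
Proof.
apply: (iffP imsetP) => [[B] | [B pB [BI ->]]]; last by exists B; rewrite // inE pB.
by rewrite inE => /andP[pB BI] ->; exists B.
Qed.

Lemma mem_insert_part t C :
  reflect ((exists2 B, B \in t & C = ce @: B) \/ (exists2 j, j \in I & C = [set j]))
          (C \in insert_part t).
Proof. by rewrite inE; apply: (iffP orP) => -[] /imsetP; by [left | right]. Qed.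

Lemma partition_remove_part p :
  partition p [set: 'I_n] -> partition (remove_part I p) [set: 'I_n'].
Proof.
case/partition_setTP => p0 p_cover p_uniq; apply/partition_setTP; split.
- apply/negP => /mem_remove_part[B pB [BI B0]].
  have [x xB xI] := subsetPn BI; have [k kx] := compl_enum_onto xI.
  have : k \in ce @^-1: B by rewrite inE kx.
  by rewrite -B0 inE.
- move=> k; have [B pB kB] := p_cover (ce k); exists (ce @^-1: B); last by rewrite inE.
  apply/mem_remove_part; exists B => //; split => //.
  by apply/subsetPn; exists (ce k); rewrite ?compl_enum_notin.
- move=> C1 C2 k /mem_remove_part[B1 pB1 [_ ->]] /mem_remove_part[B2 pB2 [_ ->]].
  by rewrite !inE => kB1 kB2; rewrite (p_uniq _ _ _ pB1 pB2 kB1 kB2).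
Qed.

Lemma partition_insert_part t :
  partition t [set: 'I_n'] -> partition (insert_part t) [set: 'I_n].
Proof.
case/partition_setTP => t0 t_cover t_uniq; apply/partition_setTP; split.
- apply/negP => /mem_insert_part[[B tB B0] | [j _ j0]].
    by have [k kB] := block_inhabited t0 tB; have := imset_f ce kB; rewrite -B0 inE.
  by have := set11 j; rewrite -j0 inE.
- move=> x; have [xI | /compl_enum_onto[k <-]] := boolP (x \in I).
    by exists [set x]; rewrite ?set11 //; apply/mem_insert_part; right; exists x.
  have [B tB kB] := t_cover k; exists (ce @: B); last exact: imset_f.
  by apply/mem_insert_part; left; exists B.
move=> C1 C2 x /mem_insert_part[[B1 tB1 ->] | [j1 j1I ->]];
  case/mem_insert_part => [[B2 tB2 ->] | [j2 j2I ->]].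
- move=> /imsetP[k1 k1B ->] /imsetP[k2 k2B /compl_enum_inj k12].
  by rewrite (t_uniq _ _ k1 tB1 tB2 k1B) // k12.
- move=> /imsetP[k _ ->]; rewrite inE => /eqP kj.
  by have := compl_enum_notin k; rewrite kj j2I.
- rewrite inE => /eqP-> /imsetP[k _ jk].
  by have := compl_enum_notin k; rewrite -jk j1I.
- by rewrite !inE => /eqP-> /eqP->.
Qed.

Lemma has_singletons_block p B :
  partition p [set: 'I_n] -> has_singletons p -> B \in p ->
  [disjoint B & I] \/ exists2 j, j \in I & B = [set j].
Proof.
move=> /partition_setTP[_ _ p_uniq] p_sing pB.
have [|/pred0Pn[x /andP[xB xI]]] := boolP [disjoint B & I]; [left | right] => //.
by exists x => //; apply: p_uniq pB (p_sing x xI) xB (set11 x).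
Qed.

Lemma insert_partK p : partition p [set: 'I_n] -> has_singletons p ->
  insert_part (remove_part I p) = p.
Proof.
move=> p_part p_sing; have /partition_setTP[p0 _ _] := p_part.
apply/setP => C; apply/mem_insert_part/idP => [[[C' /mem_remove_part[B pB [BI ->]] ->] | ] | pC].
- have [BI'|[j jI Bj]] := has_singletons_block p_part p_sing pB.
    by rewrite imset_compl_enum_preim.
  by move: BI; rewrite Bj sub1set jI.
- by case=> j jI ->; apply: p_sing.
have [CI|[j jI ->]] := has_singletons_block p_part p_sing pC; last by right; exists j.
left; exists (ce @^-1: C); last by rewrite imset_compl_enum_preim.
apply/mem_remove_part; exists C => //; split => //.
by have [x xC] := block_inhabited p0 pC; apply/subsetPn; exists x; rewrite ?(disjointFr CI xC).
Qed.

Lemma remove_partK t : partition t [set: 'I_n'] -> remove_part I (insert_part t) = t.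
Proof.
case/partition_setTP => t0 _ _; apply/setP => B; apply/mem_remove_part/idP.
  case=> C /mem_insert_part[[B' tB' ->] | [j jI ->]] [CI ->].
    by rewrite preim_compl_enum_imset.
  by move: CI; rewrite sub1set jI.
move=> tB; exists (ce @: B); first by apply/mem_insert_part; left; exists B.
rewrite preim_compl_enum_imset; split => //.
have [k kB] := block_inhabited t0 tB; apply/subsetPn.
by exists (ce k); rewrite ?imset_f ?compl_enum_notin.
Qed.

Lemma has_singletons_refines s p :
  partition s [set: 'I_n] -> partition p [set: 'I_n] -> has_singletons p ->
  refines s p -> has_singletons s.
Proof.
move=> /partition_setTP[_ s_cover _] /partition_setTP[_ _ p_uniq] p_sing /forall_inP sp j jI.
have [B sB jB] := s_cover j; have /exists_inP[B' pB' BB'] := sp B sB.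
have B'j : B' = [set j] by apply: p_uniq (p_sing j jI) (subsetP BB' j jB) (set11 j).
suff -> : [set j] = B by [].
by apply/eqP; rewrite eqEsubset sub1set jB -B'j.
Qed.

Lemma refines_insert_part (t' t : {set {set 'I_n'}}) : set0 \notin t' ->
  refines (insert_part t') (insert_part t) = refines t' t.
Proof.
move=> t'0; apply/forall_inP/forall_inP => [ins B t'B | t't C].
  have t'B_ins : ce @: B \in insert_part t' by apply/mem_insert_part; left; exists B.
  have /exists_inP[C /mem_insert_part[[B' tB' ->] | [j jI ->]] BC] := ins _ t'B_ins.
    apply/exists_inP; exists B' => //.
    by rewrite -(preim_compl_enum_imset B) -(preim_compl_enum_imset B') preimsetS.
  have [k kB] := block_inhabited t'0 t'B.
  have /(subsetP BC) := imset_f ce kB; rewrite inE => /eqP kj.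
  by have := compl_enum_notin k; rewrite kj jI.
case/mem_insert_part => [[B t'B ->] | [j jI ->]]; apply/exists_inP.
  have /exists_inP[B' tB' BB'] := t't B t'B; exists (ce @: B'); last exact: imsetS.
  by apply/mem_insert_part; left; exists B'.
by exists [set j] => //; apply/mem_insert_part; right; exists j.
Qed.

End Singletons.

Section Cumulants.
Variables (R : realType) (A : algType (R[i])%C) (phi : A -> (R[i])%C).
Variable E : exch_system phi.

Lemma ex_iota1 k : ex_iota E k 1 = 1.
Proof. by case: (ex_iota_hom E k). Qed.

Lemma ex_phi_same_kernel m (Y : 'I_m -> A) (a b : 'I_m -> nat) :
  (forall k k', (a k == a k') = (b k == b k')) ->
  ex_phi (e := E) (\prod_(k < m) ex_iota E (a k) (Y k)) =
  ex_phi (e := E) (\prod_(k < m) ex_iota E (b k) (Y k)).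
Proof.
move=> ab; have [s [s_bij sab]] := same_kernel_bij ab.
by rewrite (ex_exch E Y a s_bij); under eq_bigr do rewrite sab.
Qed.

Variables (n : nat) (I : {set 'I_n}).
Local Notation n' := #|~: I|.
Local Notation ce := (@compl_enum n I).

Lemma phi_part_insert_part (X : 'I_n -> A) t :
  partition t [set: 'I_n'] -> (forall j, j \in I -> X j = 1) ->
  phi_part E (insert_part t) X = phi_part E t (fun k => X (ce k)).
Proof.
move=> t_part X1; have ins_part := partition_insert_part t_part; rewrite /phi_part.
rewrite -(@big_rmcond _ _ _ _ _ (fun j => j \in ~: I)) => [|j]; last first.
  by rewrite inE negbK => jI; rewrite X1 //; apply: ex_iota1.
rewrite big_enum_val_monoid; apply: ex_phi_same_kernel => k k'.
rewrite !index_pblock_eq //.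
have /and3P[/eqP t_cover _ _] := t_part; have /and3P[_ ins_triv _] := ins_part.
have kt : k \in cover t by rewrite t_cover inE.
have -> : pblock (insert_part t) (ce k) = ce @: pblock t k.
  apply: def_pblock ins_triv _ _; last by rewrite imset_f // mem_pblock.
  by apply/mem_insert_part; left; exists (pblock t k); rewrite ?pblock_mem.
by rewrite (mem_imset _ _ (@compl_enum_inj n I)).
Qed.

Lemma sum_Pi m (P : pred {set {set 'I_m}}) (F : {set {set 'I_m}} -> (R[i])%C) :
  \sum_(S | partition S [set: 'I_m] && P S) F S = \sum_(s : Pi m | P (val s)) F (val s).
Proof.
rewrite (reindex_omap (val : Pi m -> _) insub) => [|S /andP[S_part _]]; last by rewrite insubT.
by apply: eq_bigl => -[S S_part] /=; rewrite S_part (insubT (partition^~ _) S_part) /= eqxx andbT.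
Qed.

Lemma sum_refines_insert_part (F : {set {set 'I_n}} -> (R[i])%C) (t : Pi n') :
  \sum_(s : Pi n | refines (val s) (insert_part (val t))) F (val s) =
  \sum_(s : Pi n' | refines (val s) (val t)) F (insert_part (val s)).
Proof.
rewrite -(sum_Pi (fun S => refines S (insert_part (val t))) F).
rewrite -(sum_Pi (fun S => refines S (val t)) (fun S => F (insert_part S))).
have ins_part := partition_insert_part (valP t).
have ins_sing : has_singletons I (insert_part (val t)).
  by move=> j jI; apply/mem_insert_part; right; exists j.
rewrite (reindex_onto (@insert_part n I) (remove_part I)) => [|S /andP[S_part S_ref]]; last first.
  by apply: insert_partK => //; apply: has_singletons_refines S_part ins_part ins_sing S_ref.
apply: eq_bigl => S; apply/andP/andP => [[/andP[ins_S_part ins_S_ref] /eqP S_eq] | [S_part S_ref]].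
  have S_part : partition S [set: 'I_n'] by rewrite -S_eq; apply: partition_remove_part.
  by have /and3P[_ _ S0] := S_part; rewrite -(refines_insert_part _ S0).
have /and3P[_ _ S0] := S_part.
by rewrite partition_insert_part // refines_insert_part // remove_partK.
Qed.

End Cumulants.

Unset Implicit Arguments.
Theorem lemma3p8 (R : realType) (A : algType (R[i])%C) (phi : A -> (R[i])%C)
  (E : exch_system phi) (n : nat) (X : 'I_n -> A) (I : {set 'I_n})
  (p : {set {set 'I_n}}) :
  nc_functional phi ->
  partition p [set: 'I_n] ->
  (forall j, j \in I -> X j = 1) ->
  (forall j, j \in I -> [set j] \in p) ->
  K E p X = K E (remove_part I p) (fun k => X (@compl_enum n I k)).
Proof.
(* Only the functional of the exchangeability system enters K. *)
move=> _ p_part X1 p_sing.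
pose p' : Pi #|~: I| := Sub (remove_part I p) (partition_remove_part I p_part).
pose g (s : Pi #|~: I|) := K E (insert_part (val s)) X.
transitivity (g p'); first by rewrite /g /= insert_partK.
rewrite -(moebius_inversion g p'); apply: eq_bigr => s _; congr (_ * _).
rewrite -(phi_part_insert_part E (valP s) X1).
pose s_ins : Pi n := Sub (insert_part (val s)) (partition_insert_part (valP s)).
rewrite (phi_part_sum_K E X s_ins) /=.
by rewrite (sum_refines_insert_part (fun S => K E S X)).
Qed.
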